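(* For each of the following sets $\mathcal S\subseteq\{0,1\}^3$, and for every set obtained from it by any sequence of coordinate negations and coordinate permutations, $\rho(\mathcal S)=1$: $\{000,001\}$, $\{000,001,110\}$, $\{000,001,110,111\}$, $\{000,011,101\}$, $\{000,011,101,110\}$.
   Context: Binary triples $(x_1,x_2,x_3)\in\{0,1\}^3$ are written $x_1x_2x_3$. Let $\mathcal S\subseteq\{0,1\}^3$ be nonempty. A distribution scheme with domain $\mathcal S$ is a pair $(P_R,\psi)$ where $P_R$ is a probability distribution on a finite set $\mathcal R$ and $\psi:\mathcal S\times\mathcal R\to\mathcal W_{12}\times\mathcal W_{23}\times\mathcal W_{31}$ for finite share alphabets. Given $\mathbf x=(x_1,x_2,x_3)\in\mathcal S$, the shares are $(W_{12},W_{23},W_{31})=\psi(\mathbf x,R)$, $R\sim P_R$. Party $P_1$ sees $V_1=(W_{12},W_{31})$, $P_2$ sees $V_2=(W_{23},W_{12})$, $P_3$ sees $V_3=(W_{31},W_{23})$. It is a 3SS scheme if (Correctness) for each $i$ there is a function $\phi_i$ with $\Pr[\phi_i(V_i)=x_i]=1$ for every $\mathbf x\in\mathcal S$, and (Perfect privacy) for each $i$ and all $\mathbf x,\mathbf x'\in\mathcal S$ with $x_i=x'_i$, $V_i$ has the same distribution under secret $\mathbf x$ as under $\mathbf x'$. The randomness complexity $\rho(\mathcal S)$ is the minimum of $\log_2|\mathcal R|$ over all 3SS schemes with domain $\mathcal S$. A coordinate negation maps $\mathcal S$ to $\{\mathbf x\oplus e_i:\mathbf x\in\mathcal S\}$;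 a coordinate permutation permutes the three coordinates of every element. *)

From Stdlib Require Import Reals.
From mathcomp Require Import all_boot all_order all_algebra all_fingroup.
From mathcomp Require Import Rstruct.

Set Implicit Arguments.
Unset Strict Implicit.
Unset Printing Implicit Defensive.

Import GRing.Theory Num.Theory.

(* Binary triples x1x2x3 : coordinate i is x i, with i : 'I_3
   (party P_1 <-> index 0, P_2 <-> index 1, P_3 <-> index 2). *)
Definition triple := {ffun 'I_3 -> bool}.

Definition mk3 (b1 b2 b3 : bool) : triple :=
  [ffun i : 'I_3 => nth false [:: b1; b2; b3] i].

Section Schemes.
Local Open Scope ring_scope.

Definition is_distribution (Rt : finType) (P : Rt -> R) : Prop :=
  (forall r, 0 <= P r) /\ \sum_(r : Rt) P r = 1.

Definition view1 (W12 W23 W31 : Type) (w : W12 * W23 * W31) : W12 * W31 :=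
  (w.1.1, w.2).
Definition view2 (W12 W23 W31 : Type) (w : W12 * W23 * W31) : W23 * W12 :=
  (w.1.2, w.1.1).
Definition view3 (W12 W23 W31 : Type) (w : W12 * W23 * W31) : W31 * W23 :=
  (w.2, w.1.2).

Definition correct_for (S : {set triple}) (Rt : finType) (P : Rt -> R)
    (W : Type) (V : eqType) (psi : triple -> Rt -> W) (f : W -> V)
    (i : 'I_3) : Prop :=
  exists phi : V -> bool,
    forall x, x \in S -> \sum_(r : Rt | phi (f (psi x r)) == x i) P r = 1.

Definition private_for (S : {set triple}) (Rt : finType) (P : Rt -> R)
    (W : Type) (V : eqType) (psi : triple -> Rt -> W) (f : W -> V)
    (i : 'I_3) : Prop :=
  forall x x', x \in S -> x' \in S -> x i = x' i ->
    forall v : V, \sum_(r : Rt | f (psi x r) == v) P r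
                = \sum_(r : Rt | f (psi x' r) == v) P r.

Definition is_3SS (S : {set triple}) (Rt : finType) (P : Rt -> R)
    (W12 W23 W31 : finType) (psi : triple -> Rt -> W12 * W23 * W31) : Prop :=
  is_distribution P /\
  correct_for S P psi (@view1 W12 W23 W31) ord0 /\
  correct_for S P psi (@view2 W12 W23 W31) (inord 1) /\
  correct_for S P psi (@view3 W12 W23 W31) (inord 2) /\
  private_for S P psi (@view1 W12 W23 W31) ord0 /\
  private_for S P psi (@view2 W12 W23 W31) (inord 1) /\
  private_for S P psi (@view3 W12 W23 W31) (inord 2).

End Schemes.

Definition has_3SS_with_rand (S : {set triple}) (n : nat) : Prop :=
  exists (Rt W12 W23 W31 : finType) (P : Rt -> R)
         (psi : triple -> Rt -> W12 * W23 * W31),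
    is_3SS S P psi /\ #|Rt| = n.

Definition log2 (x : R) : R := (ln x / ln 2)%R.

Definition rho_is (S : {set triple}) (k : R) : Prop :=
  (exists n, has_3SS_with_rand S n /\ log2 (INR n) = k) /\
  (forall n, has_3SS_with_rand S n -> (k <= log2 (INR n))%R).

Definition negate_coord (i : 'I_3) (S : {set triple}) : {set triple} :=
  [set [ffun j => if j == i then ~~ x j else x j] | x : triple in S].

Definition permute_coords (s : 'S_3) (S : {set triple}) : {set triple} :=
  [set [ffun j => x (s j)] | x : triple in S].

Inductive equiv_reach (S0 : {set triple}) : {set triple} -> Prop :=
  | reach_refl : equiv_reach S0 S0
  | reach_neg : forall i S, equiv_reach S0 S -> equiv_reach S0 (negate_coord i S)
  | reach_perm : forall s S, equiv_reach S0 S -> equiv_reach S0 (permute_coords s S).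

Definition S_a : {set triple} :=
  [set mk3 false false false; mk3 false false true].
Definition S_b : {set triple} :=
  [set mk3 false false false; mk3 false false true; mk3 true true false].
Definition S_c : {set triple} :=
  [set mk3 false false false; mk3 false false true; mk3 true true false;
       mk3 true true true].
Definition S_d : {set triple} :=
  [set mk3 false false false; mk3 false true true; mk3 true false true].
Definition S_e : {set triple} :=
  [set mk3 false false false; mk3 false true true; mk3 true false true;
       mk3 true true false].

From Stdlib Require Import Reals Lra.
From mathcomp Require Import all_boot all_algebra all_fingroup.
From mathcomp Require Import Rstruct zify.
Import GRing.Theory Num.Theory.

Set Implicit Arguments.
Unset Strict Implicit.
Unset Printing Implicit Defensive.

(* A scheme with |R| = 0 cannot carry a probability
   distribution.  A scheme with |R| = 1 is deterministic; correctness and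
   privacy then say that party i's view of the shares of x and y coincides
   exactly when x_i = y_i.  As any two parties together see all three shares,
   such a scheme rules out two secrets differing in a single coordinate
   ([adjacent_pair]) as well as a [cross_triple] of secrets; every reachable
   set contains one of these configurations.

   Every reachable set lies inside a parity constraint
   {x | x_i + x_j = c} (i <> j) or {x | x_1 + x_2 + x_3 = c}, and each of
   these four kinds of sets has an explicit scheme using one uniform random
   bit.  Schemes restrict to subsets, so |R| = 2 is achievable.

   Both properties are stable under the signed coordinate permutations
   x |-> (x_{s j} + m_j)_j, which comprise all coordinate negations and
   permutations; an induction on reachability concludes. *)

Lemma ord3_cases (k : 'I_3) : [\/ k = ord0, k = inord 1 | k = inord 2].
Proof.
case: k => [[|[|[|k]]] Hk] //.
- by apply: Or31; apply: val_inj.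
- by apply: Or32; apply: val_inj; rewrite /= inordK.
- by apply: Or33; apply: val_inj; rewrite /= inordK.
Qed.

Lemma ord3_neq10 : (inord 1 : 'I_3) != ord0. Proof. by rewrite -val_eqE /= inordK. Qed.
Lemma ord3_neq20 : (inord 2 : 'I_3) != ord0. Proof. by rewrite -val_eqE /= inordK. Qed.
Lemma ord3_neq21 : (inord 2 : 'I_3) != inord 1. Proof. by rewrite -val_eqE /= !inordK. Qed.

Lemma other_index (j k : 'I_3) : exists i : 'I_3, (i != j) && (i != k).
Proof.
have : 0 < #|~: [set j; k]|.
  rewrite lt0n; apply/eqP => empty.
  by have := cardsC [set j; k]; rewrite cards2 card_ord empty; case: (j != k).
by case/card_gt0P => i; rewrite !inE negb_or; exists i.
Qed.

Lemma distinct_cover (a b c j : 'I_3) :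
  a != b -> b != c -> a != c -> [\/ j = a, j = b | j = c].
Proof.
move: a b c j => [a Ha] [b Hb] [c Hc] [j Hj]; rewrite -!val_eqE /= => Hab Hbc Hac.
have : j = a \/ j = b \/ j = c by lia.
by case=> [E|[E|E]]; [apply: Or31|apply: Or32|apply: Or33]; apply: val_inj.
Qed.

(* Shares and views.  Share j is the share that party j does not see:
   W23 for P_1, W31 for P_2 and W12 for P_3; a party's view consists of the
   two other shares. *)

Section Views.
Variables W12 W23 W31 : eqType.
Implicit Types w : W12 * W23 * W31.

Definition share_agree w w' (j : 'I_3) : bool :=
  match nat_of_ord j with
  | 0 => w.1.2 == w'.1.2
  | 1 => w.2 == w'.2
  | _ => w.1.1 == w'.1.1
  end.

Lemma share_agree_sym w w' j : share_agree w w' j = share_agree w' w j.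
Proof. by rewrite /share_agree; case: (nat_of_ord j) => [|[|?]]; rewrite eq_sym. Qed.

Lemma share_agree_trans w w' w'' j :
  share_agree w w' j -> share_agree w' w'' j -> share_agree w w'' j.
Proof. by rewrite /share_agree; case: (nat_of_ord j) => [|[|?]] /eqP-> /eqP->. Qed.

Definition same_view (i : 'I_3) w w' : Prop :=
  forall j, j != i -> share_agree w w' j.

Lemma same_view1 w w' : view1 w = view1 w' <-> same_view ord0 w w'.
Proof.
rewrite /view1 /same_view; split=> [[E12 E31] j | agree].
  case: (ord3_cases j) => ->; rewrite ?eqxx // => _;
  by rewrite /share_agree ?inordK //= ?E12 ?E31.
move: (agree _ ord3_neq10) (agree _ ord3_neq20).
by rewrite /share_agree !inordK // => /eqP-> /eqP->.
Qed.

Lemma same_view2 w w' : view2 w = view2 w' <-> same_view (inord 1) w w'.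
Proof.
rewrite /view2 /same_view; split=> [[E23 E12] j | agree].
  case: (ord3_cases j) => ->; rewrite ?eqxx // => _;
  by rewrite /share_agree ?inordK //= ?E12 ?E23.
move: (agree ord0) (agree _ ord3_neq21); rewrite eq_sym ord3_neq10.
by rewrite /share_agree !inordK // => /(_ isT)/eqP-> /eqP->.
Qed.

Lemma same_view3 w w' : view3 w = view3 w' <-> same_view (inord 2) w w'.
Proof.
rewrite /view3 /same_view; split=> [[E31 E23] j | agree].
  case: (ord3_cases j) => ->; rewrite ?eqxx // => _;
  by rewrite /share_agree ?inordK //= ?E31 ?E23.
move: (agree ord0) (agree (inord 1)); rewrite eq_sym ord3_neq20 eq_sym ord3_neq21.
by rewrite /share_agree !inordK // => /(_ isT)/eqP-> /(_ isT)/eqP->.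
Qed.

End Views.

Definition adjacent_pair (S : {set triple}) : Prop :=
  exists x y k, [/\ x \in S, y \in S, x k != y k & forall j, j != k -> x j = y j].

Definition cross_triple (S : {set triple}) : Prop :=
  exists x y z (a b c : 'I_3),
    [/\ x \in S, y \in S & z \in S] /\ [/\ a != b, b != c & a != c] /\
    [/\ x a = y a, x b = z b, y c = z c & x b != y b].

Definition needs_randomness (S : {set triple}) : Prop :=
  adjacent_pair S \/ cross_triple S.

Section DeterministicSharing.
Variables (S : {set triple}) (W12 W23 W31 : eqType).
Variable share : triple -> W12 * W23 * W31.

Hypothesis view_iff : forall i x y, x \in S -> y \in S ->
  x i = y i <-> same_view i (share x) (share y).

(* Two secrets agreeing off k agree on all shares, hence at k. *)
Lemma deterministic_no_adjacent : ~ adjacent_pair S.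
Proof.
move=> [x [y [k [Sx Sy /eqP neq_k off_k]]]]; apply: neq_k.
apply/(view_iff k Sx Sy) => j _.
have [i /andP [ij ik]] := other_index j k.
by apply: (proj1 (view_iff i Sx Sy) (off_k i ik)); rewrite eq_sym.
Qed.

(* In a cross triple, x and y agree on share c directly and on share a via z,
   so party b sees the same shares for x and y. *)
Lemma deterministic_no_cross : ~ cross_triple S.
Proof.
move=> [x [y [z [a [b [c [[Sx Sy Sz] [[ab bc ac] [xya xzb yzc /eqP neq_b]]]]]]]]].
apply: neq_b; apply/(view_iff b Sx Sy) => j jb.
have xy := proj1 (view_iff a Sx Sy) xya.
have xz := proj1 (view_iff b Sx Sz) xzb.
have yz := proj1 (view_iff c Sy Sz) yzc.
case: (distinct_cover j ab bc ac) => E; subst j.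
- by apply: (share_agree_trans (xz _ ab)); rewrite share_agree_sym; apply: yz.
- by rewrite eqxx in jb.
- by apply: xy; rewrite eq_sym.
Qed.

End DeterministicSharing.

Section PointMass.
Local Open Scope ring_scope.
Variables (Rt : finType) (P : Rt -> R) (r0 : Rt).
Hypothesis single : forall r, r = r0.
Hypothesis P_distr : is_distribution P.

Lemma point_mass_sum (p : pred Rt) : \sum_(r | p r) P r = if p r0 then 1 else 0.
Proof.
have P_r0 : P r0 = 1.
  by case: P_distr => _ <-; rewrite (big_pred1 r0) // => r /=; rewrite (single r) eqxx.
by rewrite big_mkcond (big_pred1 r0) ?P_r0 // => r /=; rewrite (single r) eqxx.
Qed.

Variables (S : {set triple}) (W : Type) (V : eqType).
Variables (psi : triple -> Rt -> W) (view : W -> V) (i : 'I_3).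

Lemma correct_point : correct_for S P psi view i ->
  forall x y, x \in S -> y \in S -> view (psi x r0) = view (psi y r0) -> x i = y i.
Proof.
have decode phi x : \sum_(r | phi (view (psi x r)) == x i) P r = 1 ->
    phi (view (psi x r0)) = x i.
  by rewrite point_mass_sum; case: eqP => // _ /eqP; rewrite eq_sym oner_eq0.
by move=> [phi ok] x y Sx Sy E; rewrite -(decode _ _ (ok x Sx)) -(decode _ _ (ok y Sy)) E.
Qed.

Lemma private_point : private_for S P psi view i ->
  forall x y, x \in S -> y \in S -> x i = y i -> view (psi x r0) = view (psi y r0).
Proof.
move=> priv x y Sx Sy E; have := priv x y Sx Sy E (view (psi x r0)).
by rewrite !point_mass_sum eqxx; case: eqP => // _ /eqP; rewrite oner_eq0.
Qed.

End PointMass.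

Lemma single_point_views (S : {set triple}) (Rt W12 W23 W31 : finType)
    (P : Rt -> R) (psi : triple -> Rt -> W12 * W23 * W31) (r0 : Rt) :
  is_3SS S P psi -> (forall r, r = r0) ->
  forall i x y, x \in S -> y \in S ->
    x i = y i <-> same_view i (psi x r0) (psi y r0).
Proof.
move=> [distr [C1 [C2 [C3 [P1 [P2 P3]]]]]] single i x y Sx Sy.
case: (ord3_cases i) => ->.
- rewrite -same_view1; split;
    [exact: (private_point single distr P1) | exact: (correct_point single distr C1)].
- rewrite -same_view2; split;
    [exact: (private_point single distr P2) | exact: (correct_point single distr C2)].
- rewrite -same_view3; split;
    [exact: (private_point single distr P3) | exact: (correct_point single distr C3)].
Qed.

Lemma no_scheme_empty (S : {set triple}) : ~ has_3SS_with_rand S 0.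
Proof.
move=> [Rt [W12 [W23 [W31 [P [psi [[[_ sum1] _] card0]]]]]]].
move: sum1; rewrite big1 => [/eqP|r _]; first by rewrite eq_sym oner_eq0.
by have := card0_eq card0 r; rewrite inE.
Qed.

Lemma no_scheme_single (S : {set triple}) :
  needs_randomness S -> ~ has_3SS_with_rand S 1.
Proof.
move=> need [Rt [W12 [W23 [W31 [P [psi [scheme card1]]]]]]].
have [r0 single] := fintype1 card1.
have views := single_point_views scheme single.
by case: need; [apply: deterministic_no_adjacent views | apply: deterministic_no_cross views].
Qed.

Section OneBitSchemes.
Local Open Scope ring_scope.

Definition uniform_bit (r : bool) : R := 1 / 2%:R.

Lemma uniform_bit_sum (p : pred bool) :
  (forall r, p r) -> \sum_(r | p r) uniform_bit r = 1.
Proof.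
by move=> all_p; rewrite (eq_bigl predT) // big_bool /uniform_bit /= -splitr.
Qed.

Lemma uniform_bit_shift (V : eqType) (g h : bool -> V) (t : bool) :
  (forall r, g (r (+) t) = h r) ->
  forall v, \sum_(r | g r == v) uniform_bit r = \sum_(r | h r == v) uniform_bit r.
Proof.
move=> gh v; rewrite (reindex_inj (@addbI t)).
by apply: eq_bigl => r /=; rewrite addbC gh.
Qed.

Section FromShareMap.
Variables (T : {set triple}) (psi : triple -> bool -> bool * bool * bool).
Variables (phi1 phi2 phi3 : bool * bool -> bool).
Hypothesis decode1 : forall x r, x \in T -> phi1 (view1 (psi x r)) = x ord0.
Hypothesis decode2 : forall x r, x \in T -> phi2 (view2 (psi x r)) = x (inord 1).
Hypothesis decode3 : forall x r, x \in T -> phi3 (view3 (psi x r)) = x (inord 2).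
Hypothesis hide1 : forall x x', x \in T -> x' \in T -> x ord0 = x' ord0 ->
  exists t, forall r, view1 (psi x (r (+) t)) = view1 (psi x' r).
Hypothesis hide2 : forall x x', x \in T -> x' \in T -> x (inord 1) = x' (inord 1) ->
  exists t, forall r, view2 (psi x (r (+) t)) = view2 (psi x' r).
Hypothesis hide3 : forall x x', x \in T -> x' \in T -> x (inord 2) = x' (inord 2) ->
  exists t, forall r, view3 (psi x (r (+) t)) = view3 (psi x' r).

Lemma one_bit_scheme : has_3SS_with_rand T 2.
Proof.
have correct (V : eqType) (view : _ -> V) phi i :
    (forall x r, x \in T -> phi (view (psi x r)) = x i) ->
    correct_for T uniform_bit psi view i.
  by move=> dec; exists phi => x Tx; apply: uniform_bit_sum => r; rewrite dec.
have private (V : eqType) (view : _ -> V) i :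
    (forall x x', x \in T -> x' \in T -> x i = x' i ->
       exists t, forall r, view (psi x (r (+) t)) = view (psi x' r)) ->
    private_for T uniform_bit psi view i.
  by move=> hide x x' Tx Tx' E; have [t Ht] := hide x x' Tx Tx' E; apply: uniform_bit_shift Ht.
exists bool, bool, bool, bool, uniform_bit, psi; split; last by rewrite card_bool.
split; first by split=> [r | ]; [rewrite divr_ge0 | exact: (@uniform_bit_sum xpredT)].
split; first exact: correct decode1.
split; first exact: correct decode2.
split; first exact: correct decode3.
split; first exact: private hide1.
split; first exact: private hide2.
exact: private hide3.
Qed.

End FromShareMap.
End OneBitSchemes.

Definition pair_constraint (i j : 'I_3) (c : bool) : {set triple} :=
  [set x : triple | x i (+) x j == c].

Definition parity (x : triple) : bool := \big[addb/false]_(j < 3) x j.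

Definition parity_constraint (c : bool) : {set triple} :=
  [set x : triple | parity x == c].

Lemma parityE (x : triple) : parity x = x ord0 (+) x (inord 1) (+) x (inord 2).
Proof.
rewrite /parity !big_ord_recl big_ord0 addbF addbA.
by congr (_ (+) x _ (+) x _); apply: val_inj; rewrite /= inordK.
Qed.

(* Exhaustive check of a Boolean identity in the secret bits, the random
   bit and the constraint constant. *)
Ltac bit_cases :=
  repeat match goal with
  | H : is_true (_ \in _) |- _ => move: H
  | H : _ = _ |- _ => move: H
  end;
  rewrite /pair_constraint /parity_constraint ?inE ?parityE /view1 /view2 /view3 /=;
  repeat match goal with
  | |- context [@fun_of_fin ?A ?B ?x ?i] => case: (@fun_of_fin A B x i)
  | b : bool |- _ => case: b
  end.

(* On x_1 + x_2 = c, the shares (W12, W23, W31) = (x_1, r + x_3, r) work: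
   P_2 recovers x_2 as x_1 + c, and P_3 as the sum of its two shares. *)
Lemma scheme_pair01 c : has_3SS_with_rand (pair_constraint ord0 (inord 1) c) 2.
Proof.
apply: (@one_bit_scheme _ (fun x r => (x ord0, r (+) x (inord 2), r))
  (fun w => w.1) (fun w => w.2 (+) c) (fun w => w.1 (+) w.2)).
- by move=> x r; bit_cases.
- by move=> x r; bit_cases.
- by move=> x r; bit_cases.
- by move=> x x' Tx Tx' E; exists false => r; bit_cases.
- by move=> x x' Tx Tx' E; exists (x (inord 2) (+) x' (inord 2)) => r; bit_cases.
- by move=> x x' Tx Tx' E; exists false => r; bit_cases.
Qed.

Lemma scheme_pair12 c : has_3SS_with_rand (pair_constraint (inord 1) (inord 2) c) 2.
Proof.
apply: (@one_bit_scheme _ (fun x r => (r, x (inord 1), r (+) x ord0))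
  (fun w => w.1 (+) w.2) (fun w => w.1) (fun w => w.2 (+) c)).
- by move=> x r; bit_cases.
- by move=> x r; bit_cases.
- by move=> x r; bit_cases.
- by move=> x x' Tx Tx' E; exists false => r; bit_cases.
- by move=> x x' Tx Tx' E; exists false => r; bit_cases.
- by move=> x x' Tx Tx' E; exists (x ord0 (+) x' ord0) => r; bit_cases.
Qed.

Lemma scheme_pair20 c : has_3SS_with_rand (pair_constraint (inord 2) ord0 c) 2.
Proof.
apply: (@one_bit_scheme _ (fun x r => (r, r (+) x (inord 1), x (inord 2)))
  (fun w => w.2 (+) c) (fun w => w.1 (+) w.2) (fun w => w.1)).
- by move=> x r; bit_cases.
- by move=> x r; bit_cases.
- by move=> x r; bit_cases.
- by move=> x x' Tx Tx' E; exists false => r; bit_cases.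
- by move=> x x' Tx Tx' E; exists false => r; bit_cases.
- by move=> x x' Tx Tx' E; exists (x (inord 1) (+) x' (inord 1)) => r; bit_cases.
Qed.

(* On x_1 + x_2 + x_3 = c, the shares (W12, W23, W31) = (r, r + x_2, r + x_1)
   work: P_3 recovers x_3 as the sum of its two shares plus c. *)
Lemma scheme_parity c : has_3SS_with_rand (parity_constraint c) 2.
Proof.
apply: (@one_bit_scheme _ (fun x r => (r, r (+) x (inord 1), r (+) x ord0))
  (fun w => w.1 (+) w.2) (fun w => w.1 (+) w.2) (fun w => w.1 (+) w.2 (+) c)).
- by move=> x r; bit_cases.
- by move=> x r; bit_cases.
- by move=> x r; bit_cases.
- by move=> x x' Tx Tx' E; exists false => r; bit_cases.
- by move=> x x' Tx Tx' E; exists false => r; bit_cases.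
- by move=> x x' Tx Tx' E; exists (x ord0 (+) x' ord0) => r; bit_cases.
Qed.

Lemma pair_constraintC i j c : pair_constraint i j c = pair_constraint j i c.
Proof. by apply/setP => x; rewrite !inE addbC. Qed.

Lemma scheme_pair i j c : i != j -> has_3SS_with_rand (pair_constraint i j c) 2.
Proof.
case: (ord3_cases i) => ->; case: (ord3_cases j) => ->; rewrite ?eqxx // => _.
all: first [ exact: scheme_pair01 | exact: scheme_pair12 | exact: scheme_pair20
           | rewrite pair_constraintC;
             first [exact: scheme_pair01 | exact: scheme_pair12 | exact: scheme_pair20] ].
Qed.

Lemma sub_scheme (S T : {set triple}) n :
  S \subset T -> has_3SS_with_rand T n -> has_3SS_with_rand S n.
Proof.
move=> /subsetP ST [Rt [W12 [W23 [W31 [P [psi [[distr [C1 [C2 [C3 [P1 [P2 P3]]]]]] card]]]]]]].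
exists Rt, W12, W23, W31, P, psi; split=> //; split=> //.
have correct_sub (V : eqType) (f : W12 * W23 * W31 -> V) i :
    correct_for T P psi f i -> correct_for S P psi f i.
  by move=> [phi ok]; exists phi => x /ST; apply: ok.
have private_sub (V : eqType) (f : W12 * W23 * W31 -> V) i :
    private_for T P psi f i -> private_for S P psi f i.
  by move=> priv x x' /ST Tx /ST Tx'; apply: priv.
split; first exact: correct_sub C1.
split; first exact: correct_sub C2.
split; first exact: correct_sub C3.
split; first exact: private_sub P1.
split; first exact: private_sub P2.
exact: private_sub P3.
Qed.

Definition parity_covered (S : {set triple}) : Prop :=
  (exists i j c, i != j /\ S \subset pair_constraint i j c) \/
  (exists c, S \subset parity_constraint c).

Lemma covered_scheme (S : {set triple}) : parity_covered S -> has_3SS_with_rand S 2.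
Proof.
case=> [[i [j [c [ij sub]]]] | [c sub]]; apply: (sub_scheme sub).
  exact: scheme_pair.
exact: scheme_parity.
Qed.

Definition signed_perm (s : 'S_3) (m x : triple) : triple :=
  [ffun j => x (s j) (+) m j].

Lemma signed_perm_eq s m x y j :
  (signed_perm s m x j == signed_perm s m y j) = (x (s j) == y (s j)).
Proof. by rewrite !ffunE; case: (m j); rewrite ?addbT ?addbF ?(inj_eq negb_inj). Qed.

Lemma signed_perm_eqV s m x y j :
  (signed_perm s m x (s^-1 j)%g == signed_perm s m y (s^-1 j)%g) = (x j == y j).
Proof. by rewrite signed_perm_eq permKV. Qed.

Lemma negate_coordE i S : negate_coord i S = signed_perm 1 [ffun j => j == i] @: S.
Proof.
apply: eq_imset => x; apply/ffunP => j; rewrite !ffunE perm1.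
by case: (j == i); rewrite ?addbT ?addbF.
Qed.

Lemma permute_coordsE s S : permute_coords s S = signed_perm s [ffun=> false] @: S.
Proof. by apply: eq_imset => x; apply/ffunP => j; rewrite !ffunE addbF. Qed.

Lemma reach_invariant (Q : {set triple} -> Prop) :
  (forall s m S, Q S -> Q (signed_perm s m @: S)) ->
  forall S0 S, Q S0 -> equiv_reach S0 S -> Q S.
Proof.
move=> stable S0 S Q0; elim=> // [i | s] S' _ QS'.
  by rewrite negate_coordE; apply: stable.
by rewrite permute_coordsE; apply: stable.
Qed.

(* The lower-bound configurations and the parity coverings are stable under
   signed permutations: coordinate j of the image compares like coordinate
   s j of the original, and each parity constraint is mapped to another. *)
Lemma adjacent_pair_signed s m S :
  adjacent_pair S -> adjacent_pair (signed_perm s m @: S).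
Proof.
move=> [x [y [k [Sx Sy neq_k off_k]]]].
exists (signed_perm s m x), (signed_perm s m y), (s^-1 k)%g.
split; [exact: imset_f | exact: imset_f | by rewrite signed_perm_eqV |].
move=> j jk; apply/eqP; rewrite signed_perm_eq; apply/eqP/off_k.
by apply: contra jk => /eqP <-; rewrite permK.
Qed.

Lemma cross_triple_signed s m S :
  cross_triple S -> cross_triple (signed_perm s m @: S).
Proof.
move=> [x [y [z [a [b [c [[Sx Sy Sz] [[ab bc ac] [xya xzb yzc neq_b]]]]]]]]].
exists (signed_perm s m x), (signed_perm s m y), (signed_perm s m z).
exists (s^-1 a)%g, (s^-1 b)%g, (s^-1 c)%g.
split; first by split; exact: imset_f.
split; first by rewrite !(inj_eq (@perm_inj _ _)).
by split; rewrite ?signed_perm_eqV //; apply/eqP; rewrite signed_perm_eqV; apply/eqP.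
Qed.

Lemma needs_randomness_signed s m S :
  needs_randomness S -> needs_randomness (signed_perm s m @: S).
Proof.
by case=> [adj | cross]; [left; apply: adjacent_pair_signed | right; apply: cross_triple_signed].
Qed.

Lemma parity_signed_perm s m x : parity (signed_perm s m x) = parity x (+) parity m.
Proof.
rewrite /parity [in RHS](reindex_inj (@perm_inj _ s)) -big_split.
by apply: eq_bigr => j _; rewrite ffunE.
Qed.

Lemma parity_covered_signed s m S :
  parity_covered S -> parity_covered (signed_perm s m @: S).
Proof.
case=> [[i [j [c [ij /subsetP sub]]]] | [c /subsetP sub]].
  left; exists (s^-1 i)%g, (s^-1 j)%g, (c (+) m (s^-1 i)%g (+) m (s^-1 j)%g).
  split; first by rewrite (inj_eq (@perm_inj _ _)).
  apply/subsetP => _ /imsetP [x /sub Sx ->]; move: Sx; rewrite !inE !ffunE !permKV.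
  by move=> /eqP <-; case: (x i) (x j) (m _) (m _) => [] [] [] [].
right; exists (c (+) parity m); apply/subsetP => _ /imsetP [x /sub Sx ->].
by move: Sx; rewrite !inE parity_signed_perm => /eqP ->.
Qed.

(* From the bounds on |R| to rho(S) = 1; [log2 x] unfolds to ln x * / ln 2. *)

Section Log2.
Local Open Scope R_scope.

Lemma ln2_pos : 0 < ln 2.
Proof. by have := ln_lt_2; lra. Qed.

Lemma log2_2 : log2 (INR 2) = IZR 1.
Proof.
change (log2 (INR 2)) with (ln (INR 2) * / ln 2); rewrite (_ : INR 2 = 2) /=; last lra.
by field; have := ln2_pos; lra.
Qed.

Lemma log2_ge1 n : (2 <= n)%N -> IZR 1 <= log2 (INR n).
Proof.
move=> /leP n_ge2; have ln2_gt0 := ln2_pos.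
have n_ge2R : 2 <= INR n by rewrite (_ : 2 = INR 2); [exact: le_INR | rewrite /=; lra].
have le_ln : ln 2 <= ln (INR n).
  case: (Rle_lt_or_eq_dec _ _ n_ge2R) => [lt2n | <-]; last lra.
  by apply: Rlt_le; apply: ln_increasing; lra.
change (log2 (INR n)) with (ln (INR n) * / ln 2); rewrite -(Rinv_r (ln 2)); last lra.
by apply: Rmult_le_compat_r => //; apply: Rlt_le; apply: Rinv_0_lt_compat.
Qed.

End Log2.

Lemma rho_one (S : {set triple}) :
  needs_randomness S -> parity_covered S -> rho_is S (IZR 1).
Proof.
move=> need cover; split.
  by exists 2%N; split; [exact: covered_scheme | exact: log2_2].
case=> [|[|n]] scheme.
- by case: (no_scheme_empty scheme).
- by case: (no_scheme_single need scheme).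
- by apply/RleP; apply: log2_ge1.
Qed.

Lemma mk3_0 a b c : mk3 a b c ord0 = a. Proof. by rewrite ffunE. Qed.
Lemma mk3_1 a b c : mk3 a b c (inord 1) = b. Proof. by rewrite ffunE inordK. Qed.
Lemma mk3_2 a b c : mk3 a b c (inord 2) = c. Proof. by rewrite ffunE inordK. Qed.

Lemma adjacent_000_001 (S : {set triple}) :
  mk3 false false false \in S -> mk3 false false true \in S -> needs_randomness S.
Proof.
move=> S000 S001; left; exists (mk3 false false false), (mk3 false false true), (inord 2).
split=> //; first by rewrite !mk3_2.
by move=> j; case: (ord3_cases j) => ->; rewrite ?eqxx // ?mk3_0 ?mk3_1.
Qed.

(* 000 ~ 011 on coordinate 1, 000 ~ 101 on coordinate 2, 011 ~ 101 on
   coordinate 3, while 000 and 011 differ on coordinate 2. *)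
Lemma cross_000_011_101 (S : {set triple}) :
  mk3 false false false \in S -> mk3 false true true \in S ->
  mk3 true false true \in S -> needs_randomness S.
Proof.
move=> S000 S011 S101; right.
exists (mk3 false false false), (mk3 false true true), (mk3 true false true).
exists ord0, (inord 1), (inord 2); split; first by split.
split; first by split; rewrite eq_sym ?ord3_neq10 ?ord3_neq20 ?ord3_neq21.
by rewrite !mk3_0 !mk3_1 !mk3_2.
Qed.

Lemma covered_sub_S_c (S : {set triple}) : S \subset S_c -> parity_covered S.
Proof.
move=> sub; left; exists ord0, (inord 1), false; split; first by rewrite eq_sym ord3_neq10.
by apply: subset_trans sub _; rewrite !subUset !sub1set !inE !mk3_0 !mk3_1.
Qed.

Lemma covered_sub_S_e (S : {set triple}) : S \subset S_e -> parity_covered S.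
Proof.
move=> sub; right; exists false; apply: subset_trans sub _.
by rewrite !subUset !sub1set !inE !parityE !mk3_0 !mk3_1 !mk3_2.
Qed.

(* S_a, S_b, S_c all contain 000 and 001 and lie in S_c; S_d, S_e both
   contain 000, 011, 101 and lie in S_e. *)
Lemma base_sets (S0 : {set triple}) : S0 \in [:: S_a; S_b; S_c; S_d; S_e] ->
  needs_randomness S0 /\ parity_covered S0.
Proof.
rewrite !inE => /or4P [| | | /orP []] /eqP ->.
4, 5: split; [apply: cross_000_011_101 | apply: covered_sub_S_e].
1-3: split; [apply: adjacent_000_001 | apply: covered_sub_S_c].
all: by rewrite ?subUset ?sub1set !inE !eqxx ?orbT.
Qed.

Theorem mainTheorem7 :
  forall S0 : {set triple}, S0 \in [:: S_a; S_b; S_c; S_d; S_e] ->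
  forall S : {set triple}, equiv_reach S0 S -> rho_is S (IZR 1).
Proof.
move=> S0 base S reach; have [need cover] := base_sets base.
apply: rho_one.
- exact: (reach_invariant needs_randomness_signed need reach).
- exact: (reach_invariant parity_covered_signed cover reach).
Qed.
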